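(* Let $G$ be a simple graph, not necessarily connected. Then the following are equivalent: (i) $\gamma(G)\le 1$; (ii) $G$ is $\{P_3,2P_2\}$-free, i.e. no induced subgraph of $G$ is isomorphic to the path $P_3$ on three vertices or to the disjoint union $2P_2$ of two edges; (iii) $G$ is the disjoint union of a complete graph and a trivial (edgeless) graph.
   Context: For a finite graph $G$ and indeterminates $X_G=\{x_u : u\in V(G)\}$, the generalized Laplacian matrix $L(G,X_G)$ is the $V(G)\times V(G)$ matrix over $\mathbb{Z}[X_G]$ with $(u,u)$-entry $x_u$ and $(u,v)$-entry $-m_{uv}$ for $u\ne v$, $m_{uv}$ being the number of edges between $u$ and $v$. The $i$-th critical ideal $I_i(G,X_G)$ is the ideal of $\mathbb{Z}[X_G]$ generated by all $i\times i$ minors of $L(G,X_G)$ (with $I_i=\langle1\rangle$ for $i<1$, $I_i=\langle 0\rangle$ for $i>|V(G)|$). The algebraic co-rank $\gamma(G)$ is the number of critical ideals of $G$ equal to $\langle 1\rangle$. *)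

From HB Require Import structures.
From mathcomp Require Import all_boot all_order all_algebra.
From mathcomp Require Import mpoly.
From Stdlib Require Import ClassicalDescription.
Set Implicit Arguments. Unset Strict Implicit. Unset Printing Implicit Defensive.
Import GRing.Theory.
Local Open Scope ring_scope.

Definition simple_graph (n : nat) (e : rel 'I_n) : Prop :=
  (forall u v, e u v = e v u) /\ (forall u, e u u = false).

(* Generalized Laplacian L(G, X_G) over Z[x_0,...,x_{n-1}]; in a simple graph
   m_uv = 1 if uv is an edge and 0 otherwise. *)
Definition gen_laplacian (n : nat) (e : rel 'I_n) : 'M[{mpoly int[n]}]_n :=
  \matrix_(u, v) (if u == v then 'X_u else - ((e u v)%:R)).

Definition minor (n i : nat) (e : rel 'I_n) (r c : {ffun 'I_i -> 'I_n})
  : {mpoly int[n]} :=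
  \det (\matrix_(a, b) gen_laplacian e (r a) (c b)).

Definition crit_ideal_trivial (n : nat) (e : rel 'I_n) (i : nat) : Prop :=
  exists coef : {ffun {ffun 'I_i -> 'I_n} * {ffun 'I_i -> 'I_n} -> {mpoly int[n]}},
    \sum_(p : {ffun 'I_i -> 'I_n} * {ffun 'I_i -> 'I_n} | injectiveb p.1 && injectiveb p.2) coef p * minor e p.1 p.2 = 1.

Definition pbool (P : Prop) : bool :=
  if excluded_middle_informative P then true else false.

Definition alg_corank (n : nat) (e : rel 'I_n) : nat :=
  #|[set i : 'I_n.+1 | (0 < (i : nat))%N && pbool (crit_ideal_trivial e i) ]|.

Definition has_induced (k n : nat) (h : rel 'I_k) (e : rel 'I_n) : Prop :=
  exists f : 'I_k -> 'I_n, injective f /\ forall x y, e (f x) (f y) = h x y.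

Definition P3 : rel 'I_3 := fun x y =>
  ((x : nat) == 0%N) && ((y : nat) == 1%N) || ((x : nat) == 1%N) && ((y : nat) == 0%N)
  || ((x : nat) == 1%N) && ((y : nat) == 2%N) || ((x : nat) == 2%N) && ((y : nat) == 1%N).

Definition twoP2 : rel 'I_4 := fun x y =>
  ((x : nat) == 0%N) && ((y : nat) == 1%N) || ((x : nat) == 1%N) && ((y : nat) == 0%N)
  || ((x : nat) == 2%N) && ((y : nat) == 3%N) || ((x : nat) == 3%N) && ((y : nat) == 2%N).

Definition complete_plus_trivial (n : nat) (e : rel 'I_n) : Prop :=
  exists K : {set 'I_n}, forall u v, e u v = [&& u != v, u \in K & v \in K].

From HB Require Import structures.
From mathcomp Require Import all_boot all_order all_algebra.
From mathcomp Require Import mpoly.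
Set Implicit Arguments. Unset Strict Implicit. Unset Printing Implicit Defensive.
Import GRing.Theory.
Local Open Scope ring_scope.

(* An edge uw gives the 1x1 minor -1; an induced P3 a-b-c or 2P2 a-b, c-d
   gives a 2x2 minor equal to 1 (rows {a,b}, columns {b,c}, resp. rows {a,c},
   columns {b,d}), so I_1 = I_2 = <1>.  Conversely, for a clique K plus
   isolated vertices, evaluating at x_u = -1 on K and x_u = 0 off K turns
   L(G, X_G) into the rank-one matrix -1_K 1_K^T, so every minor of size at
   least 2 vanishes at a point and no I_i with i >= 2 is trivial.  Finally, in
   a {P3, 2P2}-free graph the non-isolated vertices are pairwise adjacent. *)

Lemma pboolP (P : Prop) : pbool P = true <-> P.
Proof. by rewrite /pbool; case: ClassicalDescription.excluded_middle_informative. Qed.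

Lemma det_mx22 (R : comNzRingType) (A : 'M[R]_2) :
  \det A = A 0 0 * A 1 1 - A 0 1 * A 1 0.
Proof.
rewrite (expand_det_row _ ord0) !big_ord_recl big_ord0 /cofactor !det_mx11 /=.
rewrite !mxE /= addr0 expr0 expr1 mul1r mulN1r mulrN.
by congr (A _ _ * A _ _ - A _ _ * A _ _); apply: val_inj.
Qed.

Lemma det_indicator_outer (R : comNzRingType) k (A : 'M[R]_k.+2) (x : R)
    (s t : 'I_k.+2 -> bool) :
  (forall a b, A a b = x *+ (s a && t b)) -> \det A = 0.
Proof.
move=> defA.
have det_row0 i : s i = false -> \det A = 0.
  by move=> si; rewrite (expand_det_row _ i) big1 // => j _; rewrite defA si mul0r.
case s0: (s 0); last exact: det_row0 s0.
case s1: (s 1); last exact: det_row0 s1.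
by apply: (@determinant_alternate _ _ _ 0 1) => // j; rewrite !defA s0 s1.
Qed.

Section CriticalIdeals.
Variables (n : nat) (e : rel 'I_n).

Lemma crit_ideal_trivial_of_minor i (r c : {ffun 'I_i -> 'I_n}) m :
  injectiveb r -> injectiveb c -> m * minor e r c = 1 -> crit_ideal_trivial e i.
Proof.
move=> inj_r inj_c mrc1.
exists [ffun p => if p == (r, c) then m else 0].
rewrite (bigD1 (r, c)) /=; last by rewrite inj_r inj_c.
rewrite ffunE eqxx big1 ?addr0 // => p /andP[_ /negbTE p_rc].
by rewrite ffunE p_rc mul0r.
Qed.

Lemma laplacian_offdiag u w : u != w -> gen_laplacian e u w = - (e u w)%:R.
Proof. by move=> /negbTE uw; rewrite mxE uw. Qed.

Lemma crit_ideal1_trivial_of_edge u w : u != w -> e u w -> crit_ideal_trivial e 1.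
Proof.
move=> uw euw; apply: (@crit_ideal_trivial_of_minor 1 [ffun=> u] [ffun=> w] (-1)).
- by apply/injectiveP => a b _; rewrite !ord1.
- by apply/injectiveP => a b _; rewrite !ord1.
by rewrite /minor det_mx11 !mxE !ffunE (negbTE uw) euw mulrNN mul1r.
Qed.

Lemma injectiveb_pair (a0 a1 : 'I_n) :
  a0 != a1 -> injectiveb [ffun j : 'I_2 => nth a0 [:: a0; a1] j].
Proof.
move=> a01; apply/injectiveP => j j'; rewrite !ffunE => /eqP.
by rewrite nth_uniq //= ?inE ?a01 // => /eqP /val_inj.
Qed.

(* Rows a0, a1 and columns b0, b1: the minor is (-1)(-1) - 0 * L a1 b0 = 1. *)
Lemma crit_ideal2_trivial_of_edges a0 a1 b0 b1 :
  a0 != a1 -> b0 != b1 -> a0 != b0 -> a1 != b1 -> a0 != b1 ->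
  e a0 b0 -> e a1 b1 -> ~~ e a0 b1 -> crit_ideal_trivial e 2.
Proof.
move=> a01 b01 ab00 ab11 ab01 e00 e11 /negbTE e01.
apply: (@crit_ideal_trivial_of_minor 2 _ _ 1 (injectiveb_pair a01) (injectiveb_pair b01)).
rewrite mul1r /minor det_mx22 !mxE !ffunE /= (negbTE ab00) (negbTE ab11) (negbTE ab01).
by rewrite e00 e11 e01 mulrNN mulr1 oppr0 mul0r subr0.
Qed.

Lemma crit_ideal_trivial_leq i : crit_ideal_trivial e i -> (i <= n)%N.
Proof.
move=> [coef sum1]; rewrite leqNgt; apply/negP => n_lt_i.
move: sum1; rewrite big_pred0 => [/eqP|p]; first by rewrite eq_sym oner_eq0.
apply/negbTE; apply: contraL n_lt_i => /andP[/injectiveP inj_p1 _].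
by rewrite -leqNgt -[i]card_ord -[n]card_ord; apply: leq_card inj_p1.
Qed.

Lemma alg_corank_gt1 :
  crit_ideal_trivial e 1 -> crit_ideal_trivial e 2 -> (1 < alg_corank e)%N.
Proof.
move=> I1 I2; have n1_gt2 : (2 < n.+1)%N by rewrite ltnS; apply: crit_ideal_trivial_leq I2.
pose i1 := Ordinal (ltnW n1_gt2); pose i2 := Ordinal n1_gt2.
have: [set i1; i2] \subset [set i : 'I_n.+1 | (0 < i)%N && pbool (crit_ideal_trivial e i)].
  by apply/subsetP => i; rewrite !inE => /orP[] /eqP ->; rewrite /=; apply/pboolP.
by move/subset_leq_card; apply: leq_trans; rewrite cards2.
Qed.

Lemma alg_corank_le1 : (forall k, ~ crit_ideal_trivial e k.+2) -> (alg_corank e <= 1)%N.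
Proof.
move=> nontriv; rewrite /alg_corank.
apply: leq_trans (subset_leq_card (B := [set (inord 1 : 'I_n.+1)]) _) _; last by rewrite cards1.
apply/subsetP => i; rewrite !inE; case: i => [[|[|k]] lt_i] //= /pboolP Ii.
  by apply/eqP/val_inj; rewrite /= inordK.
by case: (nontriv k Ii).
Qed.

Variable K : {set 'I_n}.
Hypothesis eK : forall u v, e u v = [&& u != v, u \in K & v \in K].

Let vK (u : 'I_n) : int := - (u \in K)%:R.

Lemma meval_laplacian u w :
  meval vK (gen_laplacian e u w) = (-1) *+ ((u \in K) && (w \in K)).
Proof.
rewrite mulNrn; case: (eqVneq u w) => [<-|uw]; last first.
  by rewrite laplacian_offdiag // rmorphN rmorph_nat eK uw.
by rewrite mxE eqxx mevalXU andbb.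
Qed.

Lemma crit_ideal_nontrivial k : ~ crit_ideal_trivial e k.+2.
Proof.
move=> [coef sum1]; have := congr1 (meval vK) sum1; rewrite meval1 rmorph_sum big1 //.
move=> p _; rewrite rmorphM /= /minor -det_map_mx.
rewrite (@det_indicator_outer _ _ _ (-1) (fun a => p.1 a \in K) (fun b => p.2 b \in K)).
  by rewrite mulr0.
by move=> a b; rewrite 2!mxE; apply: meval_laplacian.
Qed.

End CriticalIdeals.

Lemma complete_plus_trivial_alg_corank n (e : rel 'I_n) :
  complete_plus_trivial e -> (alg_corank e <= 1)%N.
Proof.
by move=> [K eK]; apply/alg_corank_le1 => k; exact: (@crit_ideal_nontrivial _ _ K eK k).
Qed.

Section InducedSubgraphs.
Variables (n : nat) (e : rel 'I_n).

Lemma has_induced_P3_alg_corank : has_induced P3 e -> (1 < alg_corank e)%N.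
Proof.
move=> [f [inj_f ef]]; have f_neq (i j : 'I_3) : i != j -> f i != f j by rewrite inj_eq.
apply: alg_corank_gt1.
- by apply: (@crit_ideal1_trivial_of_edge _ _ (f 0) (f 1)); rewrite ?ef ?f_neq.
by apply: (@crit_ideal2_trivial_of_edges _ _ (f 0) (f 1) (f 1) (f 2)); rewrite ?ef ?f_neq.
Qed.

Lemma has_induced_2P2_alg_corank : has_induced twoP2 e -> (1 < alg_corank e)%N.
Proof.
move=> [f [inj_f ef]]; have f_neq (i j : 'I_4) : i != j -> f i != f j by rewrite inj_eq.
apply: alg_corank_gt1.
- by apply: (@crit_ideal1_trivial_of_edge _ _ (f 0) (f 1)); rewrite ?ef ?f_neq.
by apply: (@crit_ideal2_trivial_of_edges _ _ (f 0) (f 2) (f 1) (f 3)); rewrite ?ef ?f_neq.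
Qed.

Lemma complete_plus_trivial_free :
  complete_plus_trivial e -> ~ has_induced P3 e /\ ~ has_induced twoP2 e.
Proof.
move=> [K eK]; split=> -[f [inj_f ef]].
  have := ef 0 2; have := ef 0 1; have := ef 1 2; rewrite !eK /=.
  move=> /and3P[_ -> ->] /and3P[_ -> _] /negbT; rewrite !andbT negbK => /eqP /inj_f.
  by move/(congr1 val).
have := ef 0 2; have := ef 0 1; have := ef 2 3; rewrite !eK /=.
move=> /and3P[_ -> _] /and3P[_ -> _] /negbT; rewrite !andbT negbK => /eqP /inj_f.
by move/(congr1 val).
Qed.

Hypothesis e_sym : forall u v, e u v = e v u.
Hypothesis e_irr : forall u, e u u = false.

Lemma induced_P3 a b c : uniq [:: a; b; c] ->
  e a b -> e b c -> ~~ e a c -> has_induced P3 e.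
Proof.
move=> abc eab ebc /negbTE eac.
exists (fun x : 'I_3 => nth a [:: a; b; c] x); split.
  by move=> x y /eqP; rewrite nth_uniq // => /eqP /val_inj.
move=> [[|[|[|?]]] ?] [[|[|[|?]]] ?] //=; rewrite /P3 /= ?e_irr //;
  by rewrite ?eab ?ebc ?eac // e_sym ?eab ?ebc ?eac.
Qed.

Lemma induced_2P2 a b c d : uniq [:: a; b; c; d] ->
  e a b -> e c d -> ~~ e a c -> ~~ e a d -> ~~ e b c -> ~~ e b d ->
  has_induced twoP2 e.
Proof.
move=> abcd eab ecd /negbTE eac /negbTE ead /negbTE ebc /negbTE ebd.
exists (fun x : 'I_4 => nth a [:: a; b; c; d] x); split.
  by move=> x y /eqP; rewrite nth_uniq // => /eqP /val_inj.
move=> [[|[|[|[|?]]]] ?] [[|[|[|[|?]]]] ?] //=; rewrite /twoP2 /= ?e_irr //;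
  by rewrite ?eab ?ecd ?eac ?ead ?ebc ?ebd // e_sym ?eab ?ecd ?eac ?ead ?ebc ?ebd.
Qed.

Lemma free_complete_plus_trivial :
  ~ has_induced P3 e -> ~ has_induced twoP2 e -> complete_plus_trivial e.
Proof.
move=> noP3 no2P2; exists [set u | [exists v, e u v]] => u v; rewrite !inE.
have neq_of_edge x y : e x y -> x != y by apply: contraTneq => ->; rewrite e_irr.
case euv: (e u v).
  rewrite neq_of_edge //=; apply/esym/andP.
  by split; apply/existsP; [exists v | exists u; rewrite e_sym].
case: (eqVneq u v) => //= uv.
case: existsP => //= -[a eua]; case: existsP => //= -[b evb]; exfalso.
have ua := neq_of_edge _ _ eua; have vb := neq_of_edge _ _ evb.
have av : a != v by apply: contraFneq euv => <-.
have bu : b != u by apply: contraFneq euv => <-; rewrite e_sym.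
have nevu : ~~ e v u by rewrite e_sym euv.
case eub: (e u b).
  have ebu : e b u by rewrite e_sym.
  apply: noP3; apply: (induced_P3 _ evb ebu nevu).
  by rewrite /= !inE !negb_or vb (eq_sym v u) uv bu.
have nav : ~~ e a v.
  apply/negP => eav; apply: noP3; apply: (induced_P3 _ eua eav (negbT euv)).
  by rewrite /= !inE !negb_or ua uv av.
case: (eqVneq a b) => [ab | ab]; first by move: nav; rewrite ab e_sym evb.
case eab: (e a b).
  apply: noP3; apply: (induced_P3 _ eua eab (negbT eub)).
  by rewrite /= !inE !negb_or ua (eq_sym u b) bu ab.
apply: no2P2; apply: (induced_2P2 _ eua evb (negbT euv) (negbT eub) nav (negbT eab)).
by rewrite /= !inE !negb_or ua uv (eq_sym u b) bu av ab vb.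
Qed.

End InducedSubgraphs.

Theorem corollary3p6 (n : nat) (e : rel 'I_n) :
  simple_graph e ->
  [/\ ((alg_corank e <= 1)%N <-> ~ has_induced P3 e /\ ~ has_induced twoP2 e),
      (~ has_induced P3 e /\ ~ has_induced twoP2 e <-> complete_plus_trivial e) &
      ((alg_corank e <= 1)%N <-> complete_plus_trivial e)].
Proof.
move=> [e_sym e_irr].
have free_cpt : ~ has_induced P3 e /\ ~ has_induced twoP2 e <-> complete_plus_trivial e.
  split; first by move=> [noP3 no2P2]; apply: free_complete_plus_trivial.
  exact: complete_plus_trivial_free.
have corank_free : (alg_corank e <= 1)%N -> ~ has_induced P3 e /\ ~ has_induced twoP2 e.
  rewrite leqNgt => /negP corank_le1; split=> induced; apply: corank_le1.
    exact: has_induced_P3_alg_corank.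
  exact: has_induced_2P2_alg_corank.
have cpt_corank := @complete_plus_trivial_alg_corank n e.
split=> //.
- by split=> [|/free_cpt]; [exact: corank_free | exact: cpt_corank].
- by split=> [/corank_free/free_cpt|]; [|exact: cpt_corank].
Qed.
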